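(* Let $X$ be a real Banach space and $Q:X^{**}\to X^{**}$ a projection with $Q[X^{**}]=\kappa_X(X)$ such that $\|f\|>\|f-Qf\|$ for every $f\notin\ker Q$. If $G$ is a group acting on $X$ by affine isometries, then $\pi(g)f\in\ker Q$ for every $g\in G$ and $f\in\ker Q$, where $\pi$ acts on $X^{**}$ by the bidual of the linear part of the action.
   Context: $\kappa_X$ is the canonical embedding of $X$ into $X^{**}$. For an action by affine isometries $(g,x)\mapsto gx$, $\pi(g)x:=gx-g0$ is its linear part (an action by linear surjective isometries); it acts on $X^*$ by $(\pi(g)x^* )(x)=x^*(\pi(g^{-1})x)$ and on $X^{**}$ by $(\pi(g)\zeta)(x^* )=\zeta(\pi(g^{-1})x^* )$, extending the action on $X$. *)

From HB Require Import structures.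
From mathcomp Require Import all_boot all_order all_algebra.
From mathcomp Require Import all_classical all_reals all_analysis.
From mathcomp Require Import monoid.
Set Implicit Arguments. Unset Strict Implicit. Unset Printing Implicit Defensive.
Import Order.TTheory GRing.Theory Num.Theory.
Import numFieldNormedType.Exports.
Local Open Scope classical_set_scope.
Local Open Scope ring_scope.

Section Bidual.
Variables (R : realType) (X : normedModType R).

Definition lin_functional (f : X -> R) : Prop :=
  forall (a : R) (x y : X), f (a *: x + y) = a * f x + f y.

Record dual := Dual {
  dual_fun :> X -> R;
  dual_lin : lin_functional dual_fun;
  dual_cont : continuous dual_fun }.

Definition dnorm (d : dual) : R :=
  sup [set `|d x| | x in [set x : X | `|x| <= 1]].

Definition lin_on_dual (z : dual -> R) : Prop :=
  forall (a : R) (d1 d2 d3 : dual),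
    (forall x, d3 x = a * d1 x + d2 x) -> z d3 = a * z d1 + z d2.

(* X^** : bounded (= continuous) linear functionals on X^*; an element of X^**
   is a function  dual -> R  satisfying  is_bidual *)
Definition is_bidual (z : dual -> R) : Prop :=
  lin_on_dual z /\ exists M : R, forall d : dual, `|z d| <= M * dnorm d.

Definition bnorm (z : dual -> R) : R :=
  sup [set `|z d| | d in [set d : dual | dnorm d <= 1]].

Definition kappa (x : X) : dual -> R := fun d => d x.

(* composition x^* o T as an element of X^*; T is meant to be a bounded
   linear operator (junk value d when it is not) *)
Lemma comp_dual_lin (d : dual) (T : X -> X) :
  (forall a x y, T (a *: x + y) = a *: T x + T y) ->
  lin_functional (fun x => d (T x)).
Proof. by move=> HT a x y; rewrite HT dual_lin. Qed.

Lemma comp_dual_cont (d : dual) (T : X -> X) :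
  continuous T -> continuous (fun x => d (T x)).
Proof.
move=> HT x; apply: continuous_comp; first exact: HT.
exact: dual_cont.
Qed.

Definition comp_dual (d : dual) (T : X -> X) : dual :=
  match pselect ((forall a x y, T (a *: x + y) = a *: T x + T y)
                 /\ continuous T) with
  | left H => @Dual (fun x => d (T x)) (@comp_dual_lin d T (proj1 H)) (@comp_dual_cont d T (proj2 H))
  | right _ => d
  end.

End Bidual.

Section Action.
Variables (R : realType) (X : normedModType R) (G : groupType).

Definition affine_isometric_action (act : G -> X -> X) : Prop :=
  [/\ forall x, act 1%g x = x,
      forall g h x, act (g * h)%g x = act g (act h x),
      forall g (t : R) x y,
        act g (t *: x + (1 - t) *: y) = t *: act g x + (1 - t) *: act g y
    & forall g x y, `|act g x - act g y| = `|x - y|].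

Definition lin_part (act : G -> X -> X) (g : G) (x : X) : X :=
  act g x - act g 0.

Definition dual_act (act : G -> X -> X) (g : G) (d : dual X) : dual X :=
  comp_dual d (lin_part act (g^-1)%g).

Definition bidual_act (act : G -> X -> X) (g : G) (z : dual X -> R)
  : dual X -> R :=
  fun d => z (dual_act act (g^-1)%g d).

End Action.

From HB Require Import structures.
From mathcomp Require Import all_boot all_order all_algebra.
From mathcomp Require Import all_classical all_reals all_analysis.
From mathcomp Require Import monoid.
From mathcomp Require Import ring.
Import Order.TTheory GRing.Theory Num.Theory.
Import numFieldNormedType.Exports.
Local Open Scope classical_set_scope.
Local Open Scope ring_scope.

(* Let f be in ker Q and h := pi(g) f, and suppose Q h <> 0.
   Since Q has range kappa(X), Q h = kappa y for some y, and the strict norm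
   hypothesis gives  ||h - kappa y|| < ||h||.
   (1) The linear part pi(g) of an affine isometric action is a linear
       surjective isometry of X, with inverse pi(g^-1); hence the induced
       actions on X^* and X^** preserve the operator norms, and pi(g)
       commutes with kappa:  pi(g) (kappa x) = kappa (pi(g) x).
   (2) Every f in ker Q is at least as close to 0 as to any point of kappa(X):
       ||f|| <= ||f - kappa x||, because Q (f - kappa x) = - kappa x and the
       strict norm hypothesis applies when kappa x <> 0.
   With x := pi(g^-1) y, (1) gives  h - kappa y = pi(g) (f - kappa x), so
   ||f - kappa x|| = ||h - kappa y|| < ||h|| = ||f||, contradicting (2). *)

Lemma dual_ext (R : realType) (X : normedModType R) (d1 d2 : dual X) :
  (forall x, d1 x = d2 x) -> d1 = d2.
Proof.
case: d1 d2 => f1 l1 c1 [f2 l2 c2] /= eq12.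
have ef : f1 = f2 by apply: funext.
by subst f2; congr Dual; exact: Prop_irrelevance.
Qed.

Lemma is_bidual_comb (R : realType) (X : normedModType R) (a : R)
    (f h : dual X -> R) :
  is_bidual f -> is_bidual h -> is_bidual (fun d => a * f d + h d).
Proof.
move=> [linf [M1 bndf]] [linh [M2 bndh]]; split.
  move=> b d1 d2 d3 e3; rewrite (linf b d1 d2 d3 e3) (linh b d1 d2 d3 e3).
  by ring.
exists (`|a| * M1 + M2) => d.
apply: (le_trans (ler_normD _ _)); rewrite mulrDl -mulrA normrM.
by apply: lerD => //; apply: ler_wpM2l.
Qed.

Section LinearPart.
Context {R : realType} {X : normedModType R} {G : groupType}.
Context {act : G -> X -> X}.
Hypothesis act_affine_iso : affine_isometric_action act.

Let pi := lin_part act.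

Lemma lin_part_norm g x : `|pi g x| = `|x|.
Proof. by case: act_affine_iso => _ _ _ iso; rewrite /pi /lin_part iso subr0. Qed.

(* pi(g) is homogeneous: affine maps preserve the segment through 0. *)
Lemma lin_partZ g (t : R) x : pi g (t *: x) = t *: pi g x.
Proof.
case: act_affine_iso => _ _ aff _; rewrite /pi /lin_part.
have -> : t *: x = t *: x + (1 - t) *: (0 : X) by rewrite scaler0 addr0.
by rewrite aff scalerBl scale1r scalerBr addrCA addrAC subrr add0r.
Qed.

(* pi(g) is additive: x + y is the midpoint of 2x and 2y. *)
Lemma lin_partD g x y : pi g (x + y) = pi g x + pi g y.
Proof.
have aff : forall (t : R) x y,
    act g (t *: x + (1 - t) *: y) = t *: act g x + (1 - t) *: act g y.
  by case: act_affine_iso.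
have half : (1 - 2^-1 : R) = 2^-1 by field.
have -> : x + y = 2^-1 *: ((2 : R) *: x) + (1 - 2^-1) *: ((2 : R) *: y).
  by rewrite half !scalerA mulVf ?pnatr_eq0 // !scale1r.
have halve z : pi g z = 2^-1 *: pi g ((2 : R) *: z).
  by rewrite lin_partZ scalerA mulVf ?pnatr_eq0 // scale1r.
rewrite (halve x) (halve y) /pi /lin_part aff half.
have split0 : act g 0 = 2^-1 *: act g 0 + 2^-1 *: act g 0.
  by rewrite -scalerDl (_ : 2^-1 + 2^-1 = 1 :> R) ?scale1r //; field.
by rewrite {1}split0 opprD addrACA !scalerBr.
Qed.

Lemma lin_part_linear g (a : R) x y : pi g (a *: x + y) = a *: pi g x + pi g y.
Proof. by rewrite lin_partD lin_partZ. Qed.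

Lemma lin_part_continuous g : continuous (pi g).
Proof.
move=> x; apply/cvgrPdist_lt => e e0.
apply: filterS (@cvgr_dist_lt _ _ _ _ _ id x cvg_id e e0) => t /=.
have -> : pi g x - pi g t = pi g ((-1) *: t + x).
  by rewrite lin_part_linear scaleN1r addrC.
by rewrite lin_part_norm scaleN1r addrC.
Qed.

Lemma lin_partK g y : pi g (pi (g^-1)%g y) = y.
Proof.
case: act_affine_iso => act1 actM _ _.
have -> : pi (g^-1)%g y = (-1) *: act (g^-1)%g 0 + act (g^-1)%g y.
  by rewrite /pi /lin_part scaleN1r addrC.
rewrite lin_part_linear scaleN1r /pi /lin_part -!actM mulgV !act1.
by rewrite sub0r opprK addrC subrK.
Qed.

Lemma dual_actE g (d : dual X) x : dual_act act g d x = d (pi (g^-1)%g x).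
Proof.
rewrite /dual_act /comp_dual; case: pselect => [//|[]]; split.
  exact: lin_part_linear.
exact: lin_part_continuous.
Qed.

Lemma dual_actK g (d : dual X) : dual_act act g (dual_act act (g^-1)%g d) = d.
Proof. by apply: dual_ext => x; rewrite !dual_actE invgK lin_partK. Qed.

(* The dual action is isometric, since pi(g^-1) maps the unit ball onto itself. *)
Lemma dnorm_dual_act g (d : dual X) : dnorm (dual_act act g d) = dnorm d.
Proof.
rewrite /dnorm; congr sup; apply/seteqP; split => _ [x /= x1 <-].
  by exists (pi (g^-1)%g x); rewrite /= ?lin_part_norm // dual_actE.
exists (pi g x); rewrite /= ?lin_part_norm // dual_actE.
by rewrite -{2}(invgK g) lin_partK.
Qed.

(* The bidual action is isometric, since the dual action permutes the unit
   ball of X^*. *)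
Lemma bnorm_bidual_act g (z : dual X -> R) : bnorm (bidual_act act g z) = bnorm z.
Proof.
rewrite /bnorm /bidual_act; congr sup; apply/seteqP; split => _ [d /= d1 <-].
  by exists (dual_act act (g^-1)%g d); rewrite /= ?dnorm_dual_act.
exists (dual_act act g d); rewrite /= ?dnorm_dual_act //.
by have := dual_actK (g^-1)%g d; rewrite invgK => ->.
Qed.

Lemma is_bidual_act g (z : dual X -> R) :
  is_bidual z -> is_bidual (bidual_act act g z).
Proof.
move=> [linz [M bndz]]; split; last first.
  by exists M => d; rewrite /bidual_act -(dnorm_dual_act (g^-1)%g d).
move=> a d1 d2 d3 e3; rewrite /bidual_act; apply: linz => x.
by rewrite !dual_actE e3.
Qed.

Lemma bidual_act_kappa g x : bidual_act act g (kappa x) = kappa (pi g x).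
Proof. by apply: funext => d; rewrite /bidual_act /kappa dual_actE invgK. Qed.

End LinearPart.

Section Projection.
Context {R : realType} {X : normedModType R}.
Context {Q : (dual X -> R) -> (dual X -> R)}.
Hypothesis Q_bidual : forall f, is_bidual f -> is_bidual (Q f).
Hypothesis Q_linear : forall (a : R) f h, is_bidual f -> is_bidual h ->
  Q (fun d => a * f d + h d) = (fun d => a * Q f d + Q h d).
Hypothesis Q_idem : forall f, is_bidual f -> Q (Q f) = Q f.
Hypothesis Q_range :
  [set Q f | f in [set f | is_bidual f]] = range (@kappa R X).
Hypothesis Q_norm : forall f, is_bidual f -> Q f <> (fun _ => 0) ->
  bnorm (fun d => f d - Q f d) < bnorm f.

Lemma Q_range_kappa f : is_bidual f -> exists x, Q f = kappa x.
Proof.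
move=> bf; have : [set Q f | f in [set f | is_bidual f]] (Q f) by exists f.
by rewrite Q_range => -[x _ ex]; exists x.
Qed.

Lemma Q_kappa x : is_bidual (kappa x) /\ Q (kappa x) = kappa x.
Proof.
have : range (@kappa R X) (kappa x) by exists x.
by rewrite -Q_range => -[f bf <-]; split; [exact: Q_bidual | exact: Q_idem].
Qed.

Lemma kerQ_best_approx f x : is_bidual f -> Q f = (fun _ => 0) ->
  bnorm f <= bnorm (fun d => f d - kappa x d).
Proof.
move=> bf Qf; have [bk Qk] := Q_kappa x.
have [k0 | k0] := pselect (kappa x = (fun _ => 0)).
  by rewrite k0; under eq_fun do rewrite subr0.
set z := fun d => f d - kappa x d.
have ez : z = (fun d => -1 * kappa x d + f d).
  by apply: funext => d; rewrite /z mulN1r addrC.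
have Qz : Q z = (fun d => - kappa x d).
  by rewrite ez Q_linear // Qk Qf; apply: funext => d; rewrite addr0 mulN1r.
have bz : is_bidual z by rewrite ez; exact: is_bidual_comb.
have Qz0 : Q z <> (fun _ => 0).
  rewrite Qz => ez0; apply: k0; apply: funext => d.
  by apply/eqP; rewrite -oppr_eq0 (congr1 (fun F => F d) ez0).
have z_sub_Qz : (fun d => z d - Q z d) = f.
  by apply: funext => d; rewrite Qz /z opprK subrK.
by apply: ltW; rewrite -{1}z_sub_Qz; exact: Q_norm.
Qed.

End Projection.

Theorem lemma3p5 (R : realType) (X : completeNormedModType R)
  (Q : (dual X -> R) -> (dual X -> R))
  (HQbid : forall f, is_bidual f -> is_bidual (Q f))
  (HQlin : forall (a : R) f h, is_bidual f -> is_bidual h ->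
     Q (fun d => a * f d + h d) = (fun d => a * Q f d + Q h d))
  (HQidem : forall f, is_bidual f -> Q (Q f) = Q f)
  (HQrange : [set Q f | f in [set f | is_bidual f]] = range (@kappa R X))
  (HQnorm : forall f, is_bidual f -> Q f <> (fun _ => 0) ->
     bnorm (fun d => f d - Q f d) < bnorm f)
  (G : groupType) (act : G -> X -> X)
  (Hact : affine_isometric_action act) :
  forall (g : G) (f : dual X -> R), is_bidual f -> Q f = (fun _ => 0) ->
    Q (bidual_act act g f) = (fun _ => 0).
Proof.
move=> g f bf Qf; apply: contrapT => Qh.
have bh := is_bidual_act Hact g f bf.
have [y Qhy] := Q_range_kappa HQrange _ bh.
pose x := lin_part act (g^-1)%g y.
have shift : (fun d => bidual_act act g f d - Q (bidual_act act g f) d)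
    = bidual_act act g (fun d => f d - kappa x d).
  apply: funext => d; rewrite Qhy -(lin_partK Hact g y) -/x.
  by rewrite -(bidual_act_kappa Hact).
have := HQnorm _ bh Qh; rewrite shift !(bnorm_bidual_act Hact).
apply/negP; rewrite -leNgt.
exact: (kerQ_best_approx HQbid HQlin HQidem HQrange HQnorm f x bf Qf).
Qed.
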